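(* Let $(T,[\cdot,\cdot],[\cdot,\cdot,\cdot],\alpha)$ be a Hom-Lie-Yamaguti algebra, $(\rho,D,\theta)$ a representation of $T$ on a Hom-vector space $(\mathfrak{h},\beta)$, and $(\nu,\omega)$, $(\nu',\omega')$ two (2,3)-cocycles of $T$ with coefficients in $\mathfrak{h}$. Let $T\oplus_{(\nu,\omega)}\mathfrak{h}$ denote the Hom-Lie-Yamaguti algebra on $T\oplus\mathfrak{h}$ with structure map $\alpha+\beta$ and brackets $$[x_1+u_1,x_2+u_2]_\nu=[x_1,x_2]+\nu(x_1,x_2)+\rho(x_1)(u_2)-\rho(x_2)(u_1),$$ $$[x_1+u_1,x_2+u_2,x_3+u_3]_\omega=[x_1,x_2,x_3]+\omega(x_1,x_2,x_3)+D(x_1,x_2)(u_3)-\theta(x_1,x_3)(u_2)+\theta(x_2,x_3)(u_1),$$ and similarly for $T\oplus_{(\nu',\omega')}\mathfrak{h}$. Consider the abelian extensions $0\to\mathfrak{h}\to T\oplus_{(\nu,\omega)}\mathfrak{h}\to T\to0$ and $0\to\mathfrak{h}\to T\oplus_{(\nu',\omega')}\mathfrak{h}\to T\to0$, where the maps are the inclusion $u\mapsto u$ and the projection $x+u\mapsto x$. These two extensions are equivalent if and only if $(\nu,\omega)$ and $(\nu',\omega')$ are in the same cohomology class, i.e. $(\nu-\nu',\omega-\omega')\in B^2(T,\mathfrak{h})\times B^3(T,\mathfrak{h})$.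
   Context: Throughout, vector spaces are over an algebraically closed field $\mathbb{K}$ of characteristic different from 2 and 3. A Hom-Lie-Yamaguti algebra (HLYA) is a vector space $T$ with a linear map $\alpha:T\to T$, a bilinear map $[\cdot,\cdot]$ and a trilinear map $[\cdot,\cdot,\cdot]$ on $T$ such that for all $x_i,y_i\in T$: (HLY01) $\alpha([x_1,x_2])=[\alpha(x_1),\alpha(x_2)]$; (HLY02) $\alpha([x_1,x_2,x_3])=[\alpha(x_1),\alpha(x_2),\alpha(x_3)]$; (HLY1) $[x_1,x_2]+[x_2,x_1]=0$; (HLY2) $[x_1,x_2,x_3]+[x_2,x_1,x_3]=0$; (HLY3) $\sum_{\mathrm{cyc}(x_1,x_2,x_3)}([[x_1,x_2],\alpha(x_3)]+[x_1,x_2,x_3])=0$; (HLY4) $[[x_1,x_2],\alpha(x_3),\alpha(y_1)]+[[x_2,x_3],\alpha(x_1),\alpha(y_1)]+[[x_3,x_1],\alpha(x_2),\alpha(y_1)]=0$; (HLY5) $[\alpha(x_1),\alpha(x_2),[y_1,y_2]]=[[x_1,x_2,y_1],\alpha^2(y_2)]+[\alpha^2(y_1),[x_1,x_2,y_2]]$; (HLY6) $[\alpha^2(x_1),\alpha^2(x_2),[y_1,y_2,y_3]]=[[x_1,x_2,y_1],\alpha^2(y_2),\alpha^2(y_3)]+[\alpha^2(y_1),[x_1,x_2,y_2],\alpha^2(y_3)]+[\alpha^2(y_1),\alpha^2(y_2),[x_1,x_2,y_3]]$. A homomorphism of HLYAs is a linear map intertwining the structure maps and preserving both brackets. A representation of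 $(T,\alpha)$ on $(V,\beta)$ is a linear map $\rho:T\to\mathrm{End}(V)$ and bilinear maps $D,\theta:T\times T\to\mathrm{End}(V)$ satisfying, for all $x_i,y_i\in T$: (HR01) $\rho(\alpha(x_1))\circ\beta=\beta\circ\rho(x_1)$; (HR02) $D(\alpha(x_1),\alpha(x_2))\circ\beta=\beta\circ D(x_1,x_2)$; (HR03) $\theta(\alpha(x_1),\alpha(x_2))\circ\beta=\beta\circ\theta(x_1,x_2)$; (HR31) $D(x_1,x_2)-\theta(x_2,x_1)+\theta(x_1,x_2)+\rho([x_1,x_2])\circ\beta-\rho(\alpha(x_1))\rho(x_2)+\rho(\alpha(x_2))\rho(x_1)=0$; (HR41) $D([x_1,x_2],\alpha(x_3))+D([x_2,x_3],\alpha(x_1))+D([x_3,x_1],\alpha(x_2))=0$; (HR42) $\theta([x_1,x_2],\alpha(y_1))\circ\beta=\theta(\alpha(x_1),\alpha(y_1))\rho(x_2)-\theta(\alpha(x_2),\alpha(y_1))\rho(x_1)$; (HR51) $D(\alpha(x_1),\alpha(x_2))\rho(y_2)=\rho(\alpha^2(y_2))D(x_1,x_2)+\rho([x_1,x_2,y_2])\circ\beta^2$; (HR52) $\theta(\alpha(x_1),[y_1,y_2])\circ\beta=\rho(\alpha^2(y_1))\theta(x_1,y_2)-\rho(\alpha^2(y_2))\theta(x_1,y_1)$; (HR61) $D(\alpha^2(x_1),\alpha^2(x_2))\theta(y_1,y_2)=\theta(\alpha^2(y_1),\alpha^2(y_2))D(x_1,x_2)+\theta([x_1,x_2,y_1],\alpha^2(y_2))\circ\beta^2+\theta(\alpha^2(y_1),[x_1,x_2,y_2])\circ\beta^2$;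 (HR62) $\theta(\alpha^2(x_1),[y_1,y_2,y_3])\circ\beta^2=\theta(\alpha^2(y_2),\alpha^2(y_3))\theta(x_1,y_1)-\theta(\alpha^2(y_1),\alpha^2(y_3))\theta(x_1,y_2)+D(\alpha^2(y_1),\alpha^2(y_2))\theta(x_1,y_3)$. $C^2(T,V)$: bilinear $\nu:T\times T\to V$, antisymmetric, with $\nu(\alpha(x_1),\alpha(x_2))=\beta(\nu(x_1,x_2))$ (CC01). $C^3(T,V)$: trilinear $\omega:T^3\to V$ with $\omega(x_1,x_2,x_3)=-\omega(x_2,x_1,x_3)$ and $\omega(\alpha(x_1),\alpha(x_2),\alpha(x_3))=\beta(\omega(x_1,x_2,x_3))$ (CC02). A (2,3)-cocycle is $(\nu,\omega)\in C^2\times C^3$ satisfying for all $x_i,y_i$: (CC1) $\sum_{\mathrm{cyc}(x_1,x_2,x_3)}\big(\omega(x_1,x_2,x_3)-\rho(\alpha(x_1))\nu(x_2,x_3)+\nu([x_1,x_2],\alpha(x_3))\big)=0$; (CC2) $\sum_{\mathrm{cyc}(x_1,x_2,x_3)}\big(\theta(\alpha(x_1),\alpha(y_1))\nu(x_2,x_3)+\omega([x_1,x_2],\alpha(x_3),\alpha(y_1))\big)=0$; (CC3) $\omega(\alpha(x_1),\alpha(x_2),[y_1,y_2])+D(\alpha(x_1),\alpha(x_2))\nu(y_1,y_2)=\nu([x_1,x_2,y_1],\alpha^2(y_2))+\nu(\alpha^2(y_1),[x_1,x_2,y_2])+\rho(\alpha^2(y_1))\omega(x_1,x_2,y_2)-\rho(\alpha^2(y_2))\omega(x_1,x_2,y_1)$;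 (CC4) $\omega(\alpha^2(x_1),\alpha^2(x_2),[y_1,y_2,y_3])+D(\alpha^2(x_1),\alpha^2(x_2))\omega(y_1,y_2,y_3)=\omega([x_1,x_2,y_1],\alpha^2(y_2),\alpha^2(y_3))+\omega(\alpha^2(y_1),[x_1,x_2,y_2],\alpha^2(y_3))+\omega(\alpha^2(y_1),\alpha^2(y_2),[x_1,x_2,y_3])+\theta(\alpha^2(y_2),\alpha^2(y_3))\omega(x_1,x_2,y_1)-\theta(\alpha^2(y_1),\alpha^2(y_3))\omega(x_1,x_2,y_2)+D(\alpha^2(y_1),\alpha^2(y_2))\omega(x_1,x_2,y_3)$. $B^2(T,V)\times B^3(T,V)$ is the set of pairs $(\nu,\omega)\in C^2\times C^3$ for which there is a linear $f:T\to V$ with $f\circ\alpha=\beta\circ f$, $\nu(x_1,x_2)=\rho(x_1)f(x_2)-\rho(x_2)f(x_1)-f([x_1,x_2])$ and $\omega(x_1,x_2,x_3)=\theta(x_2,x_3)f(x_1)-\theta(x_1,x_3)f(x_2)+D(x_1,x_2)f(x_3)-f([x_1,x_2,x_3])$. Two extensions $0\to\mathfrak{h}\xrightarrow{i}\hat T\xrightarrow{p}T\to0$ and $0\to\mathfrak{h}\xrightarrow{j}\tilde T\xrightarrow{q}T\to0$ of HLYAs are equivalent if there is a HLYA homomorphism $F:\hat T\to\tilde T$ with $F\circ i=j$ and $q\circ F=p$. *)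

From HB Require Import structures.
From mathcomp Require Import all_boot all_algebra.
Set Implicit Arguments. Unset Strict Implicit. Unset Printing Implicit Defensive.
Import GRing.Theory.
Local Open Scope ring_scope.

Section HLYA.
Variable K : fieldType.

Definition lin (U W : lmodType K) (f : U -> W) : Prop :=
  forall (a : K) x y, f (a *: x + y) = a *: f x + f y.

Definition bilin (U W : lmodType K) (f : U -> U -> W) : Prop :=
  (forall y, lin (fun x => f x y)) /\ (forall x, lin (f x)).

Definition trilin (U W : lmodType K) (f : U -> U -> U -> W) : Prop :=
  (forall y z, lin (fun x => f x y z)) /\ (forall x z, lin (fun y => f x y z))
  /\ (forall x y, lin (f x y)).

Variable T : lmodType K.

Definition is_HLYA (alpha : T -> T) (b2 : T -> T -> T) (b3 : T -> T -> T -> T) : Prop :=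
  ( lin alpha /\ bilin b2 /\ trilin b3 /\
   (forall x1 x2, alpha (b2 x1 x2) = b2 (alpha x1) (alpha x2)) /\
   (forall x1 x2 x3, alpha (b3 x1 x2 x3) = b3 (alpha x1) (alpha x2) (alpha x3)) /\
   (forall x1 x2, b2 x1 x2 + b2 x2 x1 = 0) /\
   (forall x1 x2 x3, b3 x1 x2 x3 + b3 x2 x1 x3 = 0) /\
   (forall x1 x2 x3,
       (b2 (b2 x1 x2) (alpha x3) + b3 x1 x2 x3)
     + (b2 (b2 x2 x3) (alpha x1) + b3 x2 x3 x1)
     + (b2 (b2 x3 x1) (alpha x2) + b3 x3 x1 x2) = 0) /\
   ( (forall x1 x2 x3 y1,
       b3 (b2 x1 x2) (alpha x3) (alpha y1) + b3 (b2 x2 x3) (alpha x1) (alpha y1)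
     + b3 (b2 x3 x1) (alpha x2) (alpha y1) = 0) /\
   (forall x1 x2 y1 y2,
       b3 (alpha x1) (alpha x2) (b2 y1 y2)
     = b2 (b3 x1 x2 y1) (alpha (alpha y2)) + b2 (alpha (alpha y1)) (b3 x1 x2 y2)) /\
   (forall x1 x2 y1 y2 y3,
       b3 (alpha (alpha x1)) (alpha (alpha x2)) (b3 y1 y2 y3)
     = b3 (b3 x1 x2 y1) (alpha (alpha y2)) (alpha (alpha y3))
     + b3 (alpha (alpha y1)) (b3 x1 x2 y2) (alpha (alpha y3))
     + b3 (alpha (alpha y1)) (alpha (alpha y2)) (b3 x1 x2 y3)))).

Variable V : lmodType K.

Definition is_rep (alpha : T -> T) (b2 : T -> T -> T) (b3 : T -> T -> T -> T)
  (beta : V -> V) (rho : T -> V -> V) (D theta : T -> T -> V -> V) : Prop :=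
  let a2 x := alpha (alpha x) in
  let bt2 v := beta (beta v) in
  ( lin beta /\
      (forall v, lin (fun x => rho x v)) /\ (forall x, lin (rho x)) /\
      (forall v, bilin (fun x y => D x y v)) /\ (forall x y, lin (D x y)) /\
      (forall v, bilin (fun x y => theta x y v)) /\ (forall x y, lin (theta x y)) /\
   (forall x1 v, rho (alpha x1) (beta v) = beta (rho x1 v)) /\
   (forall x1 x2 v, D (alpha x1) (alpha x2) (beta v) = beta (D x1 x2 v)) /\
   (forall x1 x2 v, theta (alpha x1) (alpha x2) (beta v) = beta (theta x1 x2 v)) /\
   (forall x1 x2 v,
       D x1 x2 v - theta x2 x1 v + theta x1 x2 v + rho (b2 x1 x2) (beta v)
       - rho (alpha x1) (rho x2 v) + rho (alpha x2) (rho x1 v) = 0) /\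
   ( (forall x1 x2 x3 v,
       D (b2 x1 x2) (alpha x3) v + D (b2 x2 x3) (alpha x1) v + D (b2 x3 x1) (alpha x2) v = 0) /\
   (forall x1 x2 y1 v,
       theta (b2 x1 x2) (alpha y1) (beta v)
       = theta (alpha x1) (alpha y1) (rho x2 v) - theta (alpha x2) (alpha y1) (rho x1 v)) /\
   (forall x1 x2 y2 v,
       D (alpha x1) (alpha x2) (rho y2 v)
       = rho (a2 y2) (D x1 x2 v) + rho (b3 x1 x2 y2) (bt2 v)) /\
   (forall x1 y1 y2 v,
       theta (alpha x1) (b2 y1 y2) (beta v)
       = rho (a2 y1) (theta x1 y2 v) - rho (a2 y2) (theta x1 y1 v)) /\
   (forall x1 x2 y1 y2 v,
       D (a2 x1) (a2 x2) (theta y1 y2 v)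
       = theta (a2 y1) (a2 y2) (D x1 x2 v) + theta (b3 x1 x2 y1) (a2 y2) (bt2 v)
         + theta (a2 y1) (b3 x1 x2 y2) (bt2 v)) /\
   (forall x1 y1 y2 y3 v,
       theta (a2 x1) (b3 y1 y2 y3) (bt2 v)
       = theta (a2 y2) (a2 y3) (theta x1 y1 v) - theta (a2 y1) (a2 y3) (theta x1 y2 v)
         + D (a2 y1) (a2 y2) (theta x1 y3 v)))).

Definition is_C2 (alpha : T -> T) (beta : V -> V) (nu : T -> T -> V) : Prop :=
  ( bilin nu /\ (forall x1 x2, nu x1 x2 = - nu x2 x1) /\
      (forall x1 x2, nu (alpha x1) (alpha x2) = beta (nu x1 x2))).

Definition is_C3 (alpha : T -> T) (beta : V -> V) (om : T -> T -> T -> V) : Prop :=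
  ( trilin om /\ (forall x1 x2 x3, om x1 x2 x3 = - om x2 x1 x3) /\
      (forall x1 x2 x3, om (alpha x1) (alpha x2) (alpha x3) = beta (om x1 x2 x3))).

Definition is_cocycle (alpha : T -> T) (b2 : T -> T -> T) (b3 : T -> T -> T -> T)
  (beta : V -> V) (rho : T -> V -> V) (D theta : T -> T -> V -> V)
  (nu : T -> T -> V) (om : T -> T -> T -> V) : Prop :=
  let a2 x := alpha (alpha x) in
  ( is_C2 alpha beta nu /\ is_C3 alpha beta om /\
   (forall x1 x2 x3,
       (om x1 x2 x3 - rho (alpha x1) (nu x2 x3) + nu (b2 x1 x2) (alpha x3))
     + (om x2 x3 x1 - rho (alpha x2) (nu x3 x1) + nu (b2 x2 x3) (alpha x1))
     + (om x3 x1 x2 - rho (alpha x3) (nu x1 x2) + nu (b2 x3 x1) (alpha x2)) = 0) /\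
   (forall x1 x2 x3 y1,
       (theta (alpha x1) (alpha y1) (nu x2 x3) + om (b2 x1 x2) (alpha x3) (alpha y1))
     + (theta (alpha x2) (alpha y1) (nu x3 x1) + om (b2 x2 x3) (alpha x1) (alpha y1))
     + (theta (alpha x3) (alpha y1) (nu x1 x2) + om (b2 x3 x1) (alpha x2) (alpha y1)) = 0) /\
   (forall x1 x2 y1 y2,
       om (alpha x1) (alpha x2) (b2 y1 y2) + D (alpha x1) (alpha x2) (nu y1 y2)
     = nu (b3 x1 x2 y1) (a2 y2) + nu (a2 y1) (b3 x1 x2 y2)
       + rho (a2 y1) (om x1 x2 y2) - rho (a2 y2) (om x1 x2 y1)) /\
   (forall x1 x2 y1 y2 y3,
       om (a2 x1) (a2 x2) (b3 y1 y2 y3) + D (a2 x1) (a2 x2) (om y1 y2 y3)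
     = om (b3 x1 x2 y1) (a2 y2) (a2 y3) + om (a2 y1) (b3 x1 x2 y2) (a2 y3)
       + om (a2 y1) (a2 y2) (b3 x1 x2 y3)
       + theta (a2 y2) (a2 y3) (om x1 x2 y1) - theta (a2 y1) (a2 y3) (om x1 x2 y2)
       + D (a2 y1) (a2 y2) (om x1 x2 y3))).

Definition is_coboundary (alpha : T -> T) (b2 : T -> T -> T) (b3 : T -> T -> T -> T)
  (beta : V -> V) (rho : T -> V -> V) (D theta : T -> T -> V -> V)
  (nu : T -> T -> V) (om : T -> T -> T -> V) : Prop :=
  is_C2 alpha beta nu /\ is_C3 alpha beta om /\
  exists f : T -> V, ( lin f /\ (forall x, f (alpha x) = beta (f x)) /\
    (forall x1 x2, nu x1 x2 = rho x1 (f x2) - rho x2 (f x1) - f (b2 x1 x2)) /\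
    (forall x1 x2 x3, om x1 x2 x3 = theta x2 x3 (f x1) - theta x1 x3 (f x2)
                                    + D x1 x2 (f x3) - f (b3 x1 x2 x3))).

Definition sum_alpha (alpha : T -> T) (beta : V -> V) (p : T * V) : T * V :=
  (alpha p.1, beta p.2).

Definition sum_br2 (b2 : T -> T -> T) (rho : T -> V -> V) (nu : T -> T -> V)
  (p q : T * V) : T * V :=
  (b2 p.1 q.1, nu p.1 q.1 + rho p.1 q.2 - rho q.1 p.2).

Definition sum_br3 (b3 : T -> T -> T -> T) (D theta : T -> T -> V -> V)
  (om : T -> T -> T -> V) (p q r : T * V) : T * V :=
  (b3 p.1 q.1 r.1,
   om p.1 q.1 r.1 + D p.1 q.1 r.2 - theta p.1 r.1 q.2 + theta q.1 r.1 p.2).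

Definition is_HLYA_hom (W1 W2 : lmodType K)
  (a1 : W1 -> W1) (b21 : W1 -> W1 -> W1) (b31 : W1 -> W1 -> W1 -> W1)
  (a2 : W2 -> W2) (b22 : W2 -> W2 -> W2) (b32 : W2 -> W2 -> W2 -> W2)
  (F : W1 -> W2) : Prop :=
  ( lin F /\ (forall x, F (a1 x) = a2 (F x)) /\
      (forall x y, F (b21 x y) = b22 (F x) (F y)) /\
      (forall x y z, F (b31 x y z) = b32 (F x) (F y) (F z))).

(* Equivalence of the abelian extensions
   0 -> V -> T (+)_(nu,om) V -> T -> 0 and 0 -> V -> T (+)_(nu',om') V -> T -> 0
   with inclusion u |-> (0,u) and projection (x,u) |-> x. *)
Definition ext_equiv (alpha : T -> T) (b2 : T -> T -> T) (b3 : T -> T -> T -> T)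
  (beta : V -> V) (rho : T -> V -> V) (D theta : T -> T -> V -> V)
  (nu : T -> T -> V) (om : T -> T -> T -> V)
  (nu' : T -> T -> V) (om' : T -> T -> T -> V) : Prop :=
  exists F : T * V -> T * V,
    ( is_HLYA_hom (sum_alpha alpha beta) (sum_br2 b2 rho nu) (sum_br3 b3 D theta om)
                    (sum_alpha alpha beta) (sum_br2 b2 rho nu') (sum_br3 b3 D theta om') F /\
        (forall u : V, F (0, u) = (0, u)) /\
        (forall p : T * V, (F p).1 = p.1)).

End HLYA.

From mathcomp Require Import all_boot all_algebra.
Set Implicit Arguments. Unset Strict Implicit. Unset Printing Implicit Defensive.
Import GRing.Theory.
Local Open Scope ring_scope.

(* An equivalence of the two extensions is linear, fixes V pointwise and lies
   over the identity of T, so it is (x, u) |-> (x, u + f x) for a linear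
   f : T -> V.  For such a map the terms of the homomorphism conditions that
   involve u cancel by linearity of rho, D and theta; what remains says exactly
   that f intertwines alpha and beta and that nu - nu' and om - om' are the
   coboundaries of f. *)

Section Linearity.
Variable K : fieldType.
Implicit Types U W : lmodType K.

Lemma linD U W (f : U -> W) : lin f -> forall x y, f (x + y) = f x + f y.
Proof. by move=> lf x y; rewrite -[x in LHS]scale1r lf scale1r. Qed.

Lemma lin0 U W (f : U -> W) : lin f -> f 0 = 0.
Proof. by move=> lf; apply: (@addrI _ (f 0)); rewrite -(linD lf) !addr0. Qed.

Lemma linB U W (f : U -> W) : lin f -> forall x y, f (x - y) = f x - f y.
Proof. by move=> lf x y; rewrite addrC -scaleN1r lf scaleN1r addrC. Qed.

Lemma lin_sub U W (f g : U -> W) : lin f -> lin g -> lin (fun x => f x - g x).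
Proof. by move=> lf lg a x y; rewrite lf lg scalerBr opprD addrACA. Qed.

Lemma bilin_sub U W (f g : U -> U -> W) :
  bilin f -> bilin g -> bilin (fun x y => f x y - g x y).
Proof. by case=> f1 f2 [g1 g2]; split=> y; apply: lin_sub. Qed.

Lemma trilin_sub U W (f g : U -> U -> U -> W) :
  trilin f -> trilin g -> trilin (fun x y z => f x y z - g x y z).
Proof.
by case=> f1 [f2 f3] [g1 [g2 g3]]; split; [|split] => y z; apply: lin_sub.
Qed.

End Linearity.

Lemma eq_is_HLYA_hom (K : fieldType) (W1 W2 : lmodType K)
    (a1 : W1 -> W1) (b21 : W1 -> W1 -> W1) (b31 : W1 -> W1 -> W1 -> W1)
    (a2 : W2 -> W2) (b22 : W2 -> W2 -> W2) (b32 : W2 -> W2 -> W2 -> W2)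
    (F G : W1 -> W2) :
  F =1 G ->
  is_HLYA_hom a1 b21 b31 a2 b22 b32 F -> is_HLYA_hom a1 b21 b31 a2 b22 b32 G.
Proof.
move=> eFG [lF [aF [b2F b3F]]].
split; [move=> a x y | split; [move=> x | split=> [x y | x y z]]]; rewrite -!eFG.
- exact: lF.
- exact: aF.
- exact: b2F.
- exact: b3F.
Qed.

Lemma addr_shift_cancel (V : zmodType) (n n' a b c : V) :
  n + a + c + (b - c - (n - n')) = n' + a + b.
Proof.
rewrite opprB -addrA [c + _]addrA subrKC [b + _]addrC addrA.
by congr (_ + _); rewrite addrC addrA subrK.
Qed.

Section AbelianExtension.
Variables (K : fieldType) (T V : lmodType K).
Variables (alpha : T -> T) (b2 : T -> T -> T) (b3 : T -> T -> T -> T).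
Variables (beta : V -> V) (rho : T -> V -> V) (D theta : T -> T -> V -> V).
Hypotheses (lin_beta : lin beta) (lin_rho : forall x, lin (rho x))
  (lin_D : forall x y, lin (D x y)) (lin_theta : forall x y, lin (theta x y)).

Lemma C2_sub (nu nu' : T -> T -> V) :
  is_C2 alpha beta nu -> is_C2 alpha beta nu' ->
  is_C2 alpha beta (fun x1 x2 => nu x1 x2 - nu' x1 x2).
Proof.
move=> [bnu [anu enu]] [bnu' [anu' enu']]; split; first exact: bilin_sub.
by split=> x1 x2; rewrite ?enu ?enu' -?linB // anu anu' opprK opprB addrC.
Qed.

Lemma C3_sub (om om' : T -> T -> T -> V) :
  is_C3 alpha beta om -> is_C3 alpha beta om' ->
  is_C3 alpha beta (fun x1 x2 x3 => om x1 x2 x3 - om' x1 x2 x3).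
Proof.
move=> [tom [aom eom]] [tom' [aom' eom']]; split; first exact: trilin_sub.
by split=> x1 x2 x3; rewrite ?eom ?eom' -?linB // aom aom' opprK opprB addrC.
Qed.

Definition shift (f : T -> V) (p : T * V) : T * V := (p.1, p.2 + f p.1).

Definition cobound2 (f : T -> V) x1 x2 :=
  rho x1 (f x2) - rho x2 (f x1) - f (b2 x1 x2).

Definition cobound3 (f : T -> V) x1 x2 x3 :=
  theta x2 x3 (f x1) - theta x1 x3 (f x2) + D x1 x2 (f x3) - f (b3 x1 x2 x3).

Lemma lin_shift f : lin (shift f) <-> lin f.
Proof.
split=> lf a x y.
  have /(congr1 snd) := lf a (x, 0) (y, 0).
  by rewrite /shift /= scaler0 !add0r.
apply: injective_projections => //=.
by rewrite lf scalerDr addrACA.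
Qed.

Lemma shift_alphaP f :
  (forall p, shift f (sum_alpha alpha beta p) = sum_alpha alpha beta (shift f p))
  <-> (forall x, f (alpha x) = beta (f x)).
Proof.
rewrite /shift /sum_alpha; split=> [hf x | hf [x u] /=].
  by have [] := hf (x, 0); rewrite (lin0 lin_beta) !add0r.
by rewrite hf (linD lin_beta).
Qed.

Section Shift.
Variable f : T -> V.

Lemma shift_br2E (nu nu' : T -> T -> V) p q :
  (sum_br2 b2 rho nu' (shift f p) (shift f q)).2
  - (shift f (sum_br2 b2 rho nu p q)).2
  = cobound2 f p.1 q.1 - (nu p.1 q.1 - nu' p.1 q.1).
Proof.
case: p q => [x u] [y v]; rewrite /sum_br2 /shift /cobound2 /= !(linD (lin_rho _)).
apply/eqP; rewrite subr_eq; apply/eqP.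
rewrite [RHS]addrC -[nu x y + _ - _]addrA addr_shift_cancel.
by rewrite -addrA opprD addrACA addrA.
Qed.

Lemma shift_br2P (nu nu' : T -> T -> V) :
  (forall p q,
     shift f (sum_br2 b2 rho nu p q) = sum_br2 b2 rho nu' (shift f p) (shift f q))
  <-> (forall x1 x2, nu x1 x2 - nu' x1 x2 = cobound2 f x1 x2).
Proof.
split=> [hom x1 x2 | hnu p q].
  by apply/esym/subr0_eq; rewrite -(shift_br2E nu nu' (x1, 0) (x2, 0)) hom subrr.
apply: injective_projections => //; apply/esym/subr0_eq.
by rewrite shift_br2E hnu subrr.
Qed.

Lemma shift_br3E (om om' : T -> T -> T -> V) p q r :
  (sum_br3 b3 D theta om' (shift f p) (shift f q) (shift f r)).2
  - (shift f (sum_br3 b3 D theta om p q r)).2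
  = cobound3 f p.1 q.1 r.1 - (om p.1 q.1 r.1 - om' p.1 q.1 r.1).
Proof.
case: p q r => [x u] [y v] [z w].
rewrite /sum_br3 /shift /cobound3 /= (linD (lin_D _ _)) !(linD (lin_theta _ _)).
apply/eqP; rewrite subr_eq; apply/eqP.
rewrite [RHS]addrC -[om x y z + _ - _ + _]addrA -[om x y z + _ + _]addrA.
rewrite addr_shift_cancel !opprD -!addrA; congr (_ + (_ + _)).
rewrite addrCA; congr (_ + _).
by rewrite addrCA [RHS]addrA [RHS]addrC -[RHS]addrA.
Qed.

Lemma shift_br3P (om om' : T -> T -> T -> V) :
  (forall p q r,
     shift f (sum_br3 b3 D theta om p q r)
     = sum_br3 b3 D theta om' (shift f p) (shift f q) (shift f r))
  <-> (forall x1 x2 x3, om x1 x2 x3 - om' x1 x2 x3 = cobound3 f x1 x2 x3).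
Proof.
split=> [hom x1 x2 x3 | hom p q r].
  apply/esym/subr0_eq.
  by rewrite -(shift_br3E om om' (x1, 0) (x2, 0) (x3, 0)) hom subrr.
apply: injective_projections => //; apply/esym/subr0_eq.
by rewrite shift_br3E hom subrr.
Qed.

Lemma is_HLYA_hom_shiftP (nu nu' : T -> T -> V) (om om' : T -> T -> T -> V) :
  is_HLYA_hom (sum_alpha alpha beta) (sum_br2 b2 rho nu) (sum_br3 b3 D theta om)
    (sum_alpha alpha beta) (sum_br2 b2 rho nu') (sum_br3 b3 D theta om') (shift f)
  <-> lin f /\ (forall x, f (alpha x) = beta (f x)) /\
      (forall x1 x2, nu x1 x2 - nu' x1 x2 = cobound2 f x1 x2) /\
      (forall x1 x2 x3, om x1 x2 x3 - om' x1 x2 x3 = cobound3 f x1 x2 x3).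
Proof.
by split=> -[/lin_shift ? [/shift_alphaP ? [/shift_br2P ? /shift_br3P ?]]].
Qed.

End Shift.

Lemma ext_map_shift (F : T * V -> T * V) :
  lin F -> (forall u, F (0, u) = (0, u)) -> (forall p, (F p).1 = p.1) ->
  F =1 shift (fun x => (F (x, 0)).2).
Proof.
move=> lF Fi Fp [x u].
have xu : (x, u) = (x, 0) + (0, u).
  by apply: injective_projections; rewrite /= ?addr0 ?add0r.
rewrite {1}xu (linD lF) Fi; apply: injective_projections => /=.
  by rewrite Fp addr0.
by rewrite addrC.
Qed.

Lemma ext_equiv_shiftP (nu nu' : T -> T -> V) (om om' : T -> T -> T -> V) :
  ext_equiv alpha b2 b3 beta rho D theta nu om nu' om' <->
  exists f, is_HLYA_hom (sum_alpha alpha beta) (sum_br2 b2 rho nu)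
    (sum_br3 b3 D theta om) (sum_alpha alpha beta) (sum_br2 b2 rho nu')
    (sum_br3 b3 D theta om') (shift f).
Proof.
split=> [[F [homF [Fi Fp]]] | [f homf]].
  have [lF _] := homF; exists (fun x => (F (x, 0)).2).
  exact: eq_is_HLYA_hom (ext_map_shift lF Fi Fp) homF.
exists (shift f); split=> //; split=> // u.
by have [/lin_shift/lin0 f0 _] := homf; rewrite /shift /= f0 addr0.
Qed.

End AbelianExtension.

Theorem lemma4p6 (K : closedFieldType)
  (hchar2 : (2%N \notin [pchar K])) (hchar3 : (3%N \notin [pchar K]))
  (T V : lmodType K)
  (alpha : T -> T) (b2 : T -> T -> T) (b3 : T -> T -> T -> T)
  (beta : V -> V) (rho : T -> V -> V) (D theta : T -> T -> V -> V)
  (nu nu' : T -> T -> V) (om om' : T -> T -> T -> V) :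
  is_HLYA alpha b2 b3 ->
  is_rep alpha b2 b3 beta rho D theta ->
  is_cocycle alpha b2 b3 beta rho D theta nu om ->
  is_cocycle alpha b2 b3 beta rho D theta nu' om' ->
  (ext_equiv alpha b2 b3 beta rho D theta nu om nu' om' <->
   is_coboundary alpha b2 b3 beta rho D theta
     (fun x1 x2 => nu x1 x2 - nu' x1 x2)
     (fun x1 x2 x3 => om x1 x2 x3 - om' x1 x2 x3)).
Proof.
move=> _ [lin_beta [_ [lin_rho [_ [lin_D [_ [lin_theta _]]]]]]].
move=> [C2nu [C3om _]] [C2nu' [C3om' _]].
have hom_shiftP := is_HLYA_hom_shiftP alpha b2 b3 lin_beta lin_rho lin_D lin_theta.
split=> [/ext_equiv_shiftP [f /hom_shiftP hf] | [_ [_ [f hf]]]].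
  split; first exact: (C2_sub lin_beta C2nu C2nu').
  by split; [exact: (C3_sub lin_beta C3om C3om') | exists f].
by apply/ext_equiv_shiftP; exists f; apply/hom_shiftP.
Qed.
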